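(* Consider $n$ agents on a directed graph $G=(\mathcal{V},\mathcal{E})$ with up to $f$ Byzantine agents, hypothesis set $\Theta$ and true state $\theta^*$ as in the context. Suppose that every $1$-dimensional reduced graph of $G$ contains exactly one source component, and that for every $\theta\neq\theta^*$ and every $1$-dimensional reduced graph $\mathcal{H}_1$ of $G$ with source component $\mathcal{S}_{\mathcal{H}_1}$, $$\sum_{j\in\mathcal{S}_{\mathcal{H}_1}}D\big(\ell_j(\cdot\mid\theta^* )\,\|\,\ell_j(\cdot\mid\theta)\big)\neq0 .$$ If all non-faulty agents run Pairwise Learning, then for every non-faulty agent $i$ and every $\theta\neq\theta^*$, $r_t^i(\theta^*,\theta)\to+\infty$ and $r_t^i(\theta,\theta^* )\to-\infty$ almost surely as $t\to\infty$.
   Context: Network: $\mathcal{V}=\{1,\dots,n\}$, $\mathcal{I}_i$ the incoming neighbors of $i$; synchronous iterations $t=1,2,\dots$. An unknown set $\mathcal{F}$ of at most $f$ agents is Byzantine (arbitrary behavior, possibly inconsistent messages, full knowledge, collusion); non-faulty agents know $f$; missing messages are replaced by a default value. Observations: $\Theta=\{\theta_1,\dots,\theta_m\}$; agent $i$ has finite signal space $\mathcal{S}_i$ and likelihoods $\ell_i(\cdot\mid\theta)$ with $\ell_i(w\mid\theta)>0$ for all $w,\theta$; in iteration $t$ it observes $s_t^i\sim\ell_i(\cdot\mid\theta^* )$, independently across agents and iterations; $\ell_i(s_{1,t}^i\mid\theta)=\prod_{r=1}^t\ell_i(s_r^i\mid\theta)$. $D$ is the Kullback–Leibler divergence $D(p\|q)=\sum_wp(w)\log\frac{p(w)}{q(w)}$.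 A $1$-dimensional reduced graph of $G$ is obtained by removing all faulty nodes and their incident links and then, for each non-faulty node, removing up to $f$ additional incoming links (for any possible faulty set of size at most $f$). A source component is a strongly connected component with no incoming links from outside it. Pairwise Learning at non-faulty agent $i$: initialize $r_0^i(\theta_1,\theta_2)=0$ for all ordered pairs $\theta_1\neq\theta_2$ in $\Theta$. In iteration $t\ge1$, for each ordered pair $(\theta_1,\theta_2)$, $\theta_1\ne\theta_2$: transmit $r_{t-1}^i(\theta_1,\theta_2)$ on all outgoing links; observe $s_t^i$ and receive values $\tilde r_{t-1}^j(\theta_1,\theta_2)$ from all $j\in\mathcal{I}_i$; sort the received values, remove the $f$ smallest and the $f$ largest, and let $\mathcal{I}_i^*[t]$ be the indices of the remaining neighbors; set $$r_t^i(\theta_1,\theta_2)=\frac{\sum_{j\in\mathcal{I}_i^*[t]}\tilde r_{t-1}^j(\theta_1,\theta_2)+r_{t-1}^i(\theta_1,\theta_2)}{|\mathcal{I}_i^*[t]|+1}+\log\frac{\ell_i(s_{1,t}^i\mid\theta_1)}{\ell_i(s_{1,t}^i\mid\theta_2)} .$$ *)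

From HB Require Import structures.
From mathcomp Require Import all_boot all_order all_algebra.
From mathcomp Require Import all_classical all_reals all_analysis.
Set Implicit Arguments. Unset Strict Implicit. Unset Printing Implicit Defensive.
Import Order.TTheory GRing.Theory Num.Theory.
Local Open Scope ring_scope.

Section PairwiseLearning.
Variables (R : realType) (n f : nat) (E : rel 'I_n).
(* E j i  means that there is a directed link j -> i. *)

Definition In_nb (i : 'I_n) : {set 'I_n} := [set j | (j != i) && E j i].

Definition reduced_graph (F : {set 'I_n}) (H : rel 'I_n) : Prop :=
  (#|F| <= f)%N /\
  (forall j i, H j i -> [&& j \notin F, i \notin F, j != i & E j i]) /\
  (forall i, i \notin F ->
     #|[set j in In_nb i | (j \notin F) && ~~ H j i]| <= f)%N.

Definition source_component (F : {set 'I_n}) (H : rel 'I_n) (C : {set 'I_n}) : Prop :=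
  (exists2 x, x \notin F &
     C = [set y | (y \notin F) && (connect H x y && connect H y x)]) /\
  (forall j i, H j i -> i \in C -> j \in C).

Variables (Th : finType) (S : 'I_n -> finType) (ell : forall i, Th -> S i -> R).

Definition KL (i : 'I_n) (a b : Th) : R :=
  \sum_(w : S i) @ell i a w * ln (@ell i a w / @ell i b w).

Definition trimmed_sum (vals : seq R) : R :=
  \sum_(v <- drop f (take (size vals - f) (sort <=%R vals))) v.

(* F = faulty set; adv t j i a b = value sent at
   iteration t.+1 by faulty j to i for pair (a,b); obs i k = signal observed
   by agent i at iteration k.+1.  PL t i a b = r_t^i(a,b). *)
Fixpoint PL (F : {set 'I_n}) (adv : nat -> 'I_n -> 'I_n -> Th -> Th -> R)
  (obs : forall i, nat -> S i) (t : nat) : 'I_n -> Th -> Th -> R :=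
  match t with
  | 0 => fun _ _ _ => 0
  | t'.+1 => fun i a b =>
      let vals := [seq (if j \in F then adv t' j i a b else PL F adv obs t' j a b)
                  | j <- enum (In_nb i)] in
      (trimmed_sum vals + PL F adv obs t' i a b) / ((size vals - 2 * f)%N%:R + 1)
      + ln ((\prod_(k < t'.+1) @ell i a (obs i k)) /
            (\prod_(k < t'.+1) @ell i b (obs i k)))
  end.

End PairwiseLearning.

From HB Require Import structures.
From mathcomp Require Import all_boot all_order all_algebra.
From mathcomp Require Import all_classical all_reals all_analysis.
From mathcomp Require Import zify ring lra.
Import Order.TTheory GRing.Theory Num.Theory.
Set Implicit Arguments. Unset Strict Implicit. Unset Printing Implicit Defensive.
Local Open Scope ring_scope.

(* Fix th <> th_star.  Where ell_j(.|th_star) and ell_j(.|th) differ, the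
   log-likelihood ratio L_t of agent j's signals tends to +oo almost surely:
   Markov's inequality for exp(-L_t/2) bounds P(L_t <= c t) by a geometric
   sequence whose ratio comes from the Bhattacharyya coefficient of the two
   laws, which is < 1, and Borel-Cantelli applies.

   At most f received values are faulty, so the trimmed sum is bounded below
   by non-faulty values: once all innovations are nonnegative, the non-faulty
   r_t stay above a uniform bound, and they diverge at informative agents.  An
   agent with more than f diverging non-faulty in-neighbours diverges too.  If
   some non-faulty agent did not diverge, cutting at each non-diverging agent
   its links from diverging ones would leave a reduced graph with a source
   component free of informative agents, against identifiability.  Finally
   r_t(th, th_star) = - r_t(th_star, th) computed against negated faulty
   values. *)

Section TrimmedSum.
Variables (R : realType) (f : nat).
Implicit Types (s : seq R) (mu X : R).

Definition trimmed s := drop f (take (size s - f) (sort <=%R s)).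

Lemma trimmed_sumE s : trimmed_sum f s = \sum_(v <- trimmed s) v.
Proof. by []. Qed.

(* [size_sort] read at the carrier of [R], so that [lia] sees one atom [size s]. *)
Lemma size_sort_ler s : size (sort <=%R s) = size s.
Proof. exact: size_sort. Qed.

Lemma size_trimmed s : size (trimmed s) = (size s - 2 * f)%N.
Proof. by rewrite size_drop size_takel ?size_sort_ler ?leq_subr //; lia. Qed.

Lemma sort_trimmed s : (2 * f <= size s)%N ->
  sort <=%R s = take f (sort <=%R s) ++ trimmed s ++ drop (size s - f) (sort <=%R s).
Proof.
move=> s_ge; rewrite catA -{1}(cat_take_drop (size s - f) (sort <=%R s)).
congr (_ ++ _); rewrite -{1}(cat_take_drop f (take _ _)) take_takel //; lia.
Qed.

Lemma sort_pairwise s : pairwise <=%R (sort <=%R s).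
Proof. by rewrite -sorted_pairwise ?sort_sorted //; [exact: le_total | exact: le_trans]. Qed.

Lemma trimmed_ge mu s : (count (< mu) s <= f)%N -> all (>= mu) (trimmed s).
Proof.
move=> few_small; have [s_ge|s_lt] := leqP (2 * f) (size s); last first.
  by rewrite [trimmed s]size0nil // size_trimmed; lia.
apply/allP => x x_mid; rewrite /= leNgt; apply/negP => x_lt.
have := sort_pairwise s; rewrite (sort_trimmed s_ge) pairwise_cat => /and3P[low_le _ _].
have low_small : all (< mu) (take f (sort <=%R s)).
  apply/allP => y y_low; apply: le_lt_trans x_lt.
  by move/allrelP: low_le => /(_ y x y_low); rewrite mem_cat x_mid; apply.
have := count_sort <=%R (< mu) s; rewrite (sort_trimmed s_ge) !count_cat.
move: low_small; rewrite all_count => /eqP ->; rewrite size_takel ?size_sort_ler; last lia.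
have : (0 < count (< mu) (trimmed s))%N by rewrite -has_count; apply/hasP; exists x.
lia.
Qed.

Lemma has_trimmed_ge X s : (f < count (>= X) s)%N -> (2 * f < size s)%N ->
  has (>= X) (trimmed s).
Proof.
move=> many_large s_gt; have s_ge : (2 * f <= size s)%N by exact: ltnW.
apply/hasPn => no_large.
have := sort_pairwise s; rewrite (sort_trimmed s_ge) pairwise_cat => /and3P[low_le _ _].
have : (0 < size (trimmed s))%N by rewrite size_trimmed; lia.
case mid_eq: (trimmed s) => [//|x l] _.
have x_mid : x \in trimmed s by rewrite mid_eq mem_head.
have low_small : all (< X) (take f (sort <=%R s)).
  apply/allP => y y_low; rewrite /= ltNge; apply/negP => Xy; move: (no_large x x_mid).
  move/allrelP: low_le => /(_ y x y_low); rewrite mem_cat x_mid => /(_ isT) yx.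
  by rewrite /= (le_trans Xy yx).
have high_few : (count (>= X) (drop (size s - f) (sort <=%R s)) <= f)%N.
  by apply: leq_trans (count_size _ _) _; rewrite size_drop size_sort_ler; lia.
have := count_sort <=%R (>= X) s; rewrite (sort_trimmed s_ge) !count_cat.
have -> : count (>= X) (take f (sort <=%R s)) = 0%N.
  apply/eqP; rewrite -leqn0 leqNgt -has_count.
  by apply/hasPn => y /(allP low_small); rewrite /= ltNge.
have -> : count (>= X) (trimmed s) = 0%N.
  by apply/eqP; rewrite -leqn0 leqNgt -has_count; apply/hasPn.
lia.
Qed.

Lemma sum_ge_size_mul mu (l : seq R) : all (>= mu) l -> (size l)%:R * mu <= \sum_(v <- l) v.
Proof.
elim: l => [|x l IH] /=; first by rewrite big_nil mul0r.
by move=> /andP[mu_x /IH]; rewrite big_cons -addn1 natrD mulrDl mul1r addrC; exact: lerD.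
Qed.

Lemma trimmed_sum_ge mu s : (count (< mu) s <= f)%N ->
  (size s - 2 * f)%:R * mu <= trimmed_sum f s.
Proof. by move=> /trimmed_ge; rewrite trimmed_sumE -size_trimmed; exact: sum_ge_size_mul. Qed.

Lemma trimmed_sum_ge_large mu X s : (count (< mu) s <= f)%N ->
  (f < count (>= X) s)%N -> (2 * f < size s)%N ->
  X + (size s - 2 * f).-1%:R * mu <= trimmed_sum f s.
Proof.
move=> /trimmed_ge all_ge many_large s_gt; rewrite trimmed_sumE -size_trimmed.
have /hasP[y y_mid Xy] := has_trimmed_ge many_large s_gt.
rewrite (big_rem y y_mid) lerD // -(size_rem y_mid) sum_ge_size_mul //.
by apply/allP => z /mem_rem /(allP all_ge).
Qed.

Lemma sort_map_opp s : sort <=%R (map -%R s) = rev (map -%R (sort <=%R s)).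
Proof.
apply: (sorted_eq le_trans le_anti); first by apply: sort_sorted; exact: le_total.
  rewrite rev_sorted sorted_map; apply: sub_sorted (sort_sorted le_total s).
  by move=> x y /=; rewrite lerN2.
apply: perm_trans (permEl (perm_sort _ _)) _; rewrite perm_sym.
by apply: perm_trans (permEl (perm_rev _)) _; apply/perm_map/permEl/perm_sort.
Qed.

Lemma trimmed_sumN s : trimmed_sum f (map -%R s) = - trimmed_sum f s.
Proof.
rewrite !trimmed_sumE /trimmed sort_map_opp size_map.
set ss := sort <=%R s; have size_ss : size ss = size s by rewrite size_sort_ler.
rewrite take_rev drop_rev big_rev !size_map !size_drop size_ss.
rewrite -map_drop -map_take big_map sumrN; congr (- _).
rewrite size_map size_ss.
have [f_le|f_gt] := leqP f (size s); last first.
  have -> : (size s - f = 0)%N by lia.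
  by rewrite subn0 drop_oversize ?size_ss // take0.
have -> : (size s - (size s - f) = f)%N by lia.
have [f2_le|f2_gt] := leqP (2 * f) (size s).
  by rewrite take_drop subnK //; lia.
have -> : (size s - f - f = 0)%N by lia.
by rewrite take0 drop_oversize // size_takel ?size_ss ?leq_subr //; lia.
Qed.

End TrimmedSum.

Section SourceComponents.
Variables (n f : nat) (E : rel 'I_n).

Lemma connect_closed_mem (H : rel 'I_n) (D : {set 'I_n}) x y :
  (forall j k, H j k -> k \in D -> j \in D) -> x \in D -> connect H y x -> y \in D.
Proof.
move=> D_closed x_D /connectP[p]; elim: p y => [|z p IH] y /=; first by move=> _ <-.
by move=> /andP[Hyz z_p] x_last; apply: D_closed Hyz (IH z z_p x_last).
Qed.

Lemma exists_source_component (F : {set 'I_n}) (H : rel 'I_n) (D : {set 'I_n}) x0 :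
  x0 \in D -> (forall j, j \in D -> j \notin F) -> (forall j k, H j k -> k \in D -> j \in D) ->
  exists2 C, source_component F H C & C \subset D.
Proof.
move=> x0_D DF D_closed.
pose anc x := [set y | connect H y x].
have [x x_D x_min] := arg_minnP (fun x => #|anc x|) x0_D.
exists [set y | (y \notin F) && (connect H x y && connect H y x)]; last first.
  by apply/fintype.subsetP => y; rewrite inE => /and3P[_ _ /(connect_closed_mem D_closed x_D)].
split=> [|j i Hji]; first by exists x; [exact: DF|].
rewrite !inE => /and3P[_ xi ix].
have jx : connect H j x by apply: connect_trans (connect1 Hji) ix.
have j_D : j \in D by exact: connect_closed_mem D_closed x_D jx.
have anc_sub : anc j \subset anc x.
  by apply/fintype.subsetP => y; rewrite !inE => /connect_trans; apply.
have /eqP anc_eq : anc j == anc x by rewrite eqEcard anc_sub x_min.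
have : x \in anc j by rewrite anc_eq inE connect0.
by rewrite inE => ->; rewrite jx andbT DF.
Qed.

Variable Info : {set 'I_n}.
Hypothesis source_meets_Info : forall F H C,
  reduced_graph f E F H -> source_component F H C -> exists2 j, j \in C & j \in Info.

(* Otherwise declare f in-neighbours of [i] faulty and drop its remaining
   links: [i] alone is then a source component without informative agent. *)
Lemma two_f_lt_card_In_nb i : i \notin Info -> (2 * f < #|In_nb E i|)%N.
Proof.
move=> i_Info; rewrite ltnNge; apply/negP => few_nb.
pose F := [set j in take f (enum (In_nb E i))].
pose H j k := [&& j \notin F, k \notin F, j != k, E j k & k != i].
have card_F : #|F| = minn f #|In_nb E i|.
  by rewrite cardsE (card_uniqP (take_uniq _ (enum_uniq _))) size_take_min cardE.
have F_nb : F \subset In_nb E i.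
  by apply/fintype.subsetP => j; rewrite inE => /mem_take; rewrite mem_enum.
have i_F : i \notin F by apply/negP => /(fintype.subsetP F_nb); rewrite inE eqxx.
clearbody F.
have H_red : reduced_graph f E F H.
  split; first by rewrite card_F geq_minl.
  split=> [j k /and5P[-> -> -> -> _] //|k k_F].
  have [->|k_i] := eqVneq k i.
    apply: leq_trans (_ : #|In_nb E i :\: F| <= f)%N; last by rewrite cardsDS // card_F; lia.
    by apply: subset_leq_card; apply/fintype.subsetP => j; rewrite !inE => /andP[-> /andP[->]].
  rewrite eq_card0 // => j; rewrite !inE /H k_F k_i /=.
  by case: (j \in F); case: (j != k); case: (E j k).
have [C C_src] : exists2 C, source_component F H C & C \subset [set i].
  apply: (exists_source_component (x0 := i)); first by rewrite inE.
    by move=> j; rewrite inE => /eqP ->.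
  by move=> j k /and5P[_ _ _ _ k_i]; rewrite inE => /eqP k_eq; rewrite k_eq eqxx in k_i.
move/fintype.subsetP => C_i; have [j j_C j_Info] := source_meets_Info H_red C_src.
by move: (C_i j j_C); rewrite inE => /eqP j_eq; rewrite -j_eq j_Info in i_Info.
Qed.

(* Otherwise cut the links from [Good] into the non-faulty agents outside
   [Good]: these agents then contain a source component, which has no
   informative agent. *)
Lemma reduced_graph_closure (F Good : {set 'I_n}) :
  (#|F| <= f)%N ->
  (forall j, j \notin F -> j \in Info -> j \in Good) ->
  (forall j, j \notin F -> j \notin Good ->
     (#|[set k in In_nb E j | (k \notin F) && (k \in Good)]| <= f)%N) ->
  forall i, i \notin F -> i \in Good.
Proof.
move=> card_F Info_Good few_Good i i_F; apply/negPn/negP => i_Good.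
pose D := [set j | (j \notin F) && (j \notin Good)].
pose H j k := [&& j \notin F, k \notin F, j != k, E j k & ~~ ((k \in D) && (j \in Good))].
have H_red : reduced_graph f E F H.
  split=> //; split=> [j k /and5P[-> -> -> -> _] //|k k_F].
  case k_D: (k \in D).
    apply: leq_trans (few_Good k k_F _); last by move: k_D; rewrite inE => /andP[].
    apply: subset_leq_card; apply/fintype.subsetP => j; rewrite !inE /H k_D k_F /=.
    by move=> /andP[/andP[-> ->] /andP[-> /negPn]].
  rewrite eq_card0 // => j; rewrite !inE /H k_D k_F /= andbT.
  by case: (j != k); case: (E j k); case: (j \notin F).
have [C C_src C_D] : exists2 C, source_component F H C & C \subset D.
  apply: (exists_source_component (x0 := i)); first by rewrite inE i_F i_Good.
    by move=> j; rewrite inE => /andP[].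
  move=> j k /and5P[j_F _ _ _ not_cut] k_D.
  by rewrite k_D /= in not_cut; rewrite inE j_F.
have [j j_C j_Info] := source_meets_Info H_red C_src.
move/fintype.subsetP: C_D => /(_ j j_C); rewrite inE => /andP[j_F].
by rewrite Info_Good.
Qed.

End SourceComponents.

Local Open Scope classical_set_scope.

Lemma count_mem_enum (T : finType) (A B : {set T}) : count (mem B) (enum A) = #|A :&: B|.
Proof.
rewrite cardE -size_filter; apply/perm_size/uniq_perm; first exact/filter_uniq/enum_uniq.
  exact: enum_uniq.
by move=> x; rewrite mem_filter !mem_enum finset.in_setI andbC.
Qed.

Section ResilientDynamics.
Variables (R : realType) (n f : nat) (E : rel 'I_n) (F Info : {set 'I_n}).
Variables (adv : nat -> 'I_n -> 'I_n -> R) (v L : nat -> 'I_n -> R).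

Definition received t i :=
  [seq (if j \in F then adv t j i else v t j) | j <- enum (In_nb E i)].

Hypothesis v_rec : forall t i, i \notin F -> v t.+1 i =
  (trimmed_sum f (received t i) + v t i) / ((size (received t i) - 2 * f)%:R + 1)
  + L t.+1 i.
Hypothesis card_F : (#|F| <= f)%N.
Hypothesis L_Info : forall i, i \notin F -> i \in Info -> L^~ i @ \oo --> +oo.
Hypothesis L_notInfo : forall i, i \notin F -> i \notin Info -> forall t, L t i = 0.
Hypothesis source_meets_Info : forall F' H C,
  reduced_graph f E F' H -> source_component F' H C -> exists2 j, j \in C & j \in Info.

Lemma size_received t i : size (received t i) = #|In_nb E i|.
Proof. by rewrite size_map -cardE. Qed.

Lemma count_received_lt t i mu : (forall j, j \notin F -> mu <= v t j) ->
  (count (< mu) (received t i) <= f)%N.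
Proof.
move=> mu_le; rewrite count_map; apply: leq_trans card_F.
apply: leq_trans (sub_count (a2 := mem F) _ _) _.
  by move=> j /=; case: ifP => // /negbT /mu_le; rewrite ltNge => ->.
by rewrite count_mem_enum subset_leq_card ?subsetIr.
Qed.

Lemma count_received_ge t i X (K : {set 'I_n}) : K \subset In_nb E i :\: F ->
  (forall k, k \in K -> X <= v t k) -> (#|K| <= count (>= X) (received t i))%N.
Proof.
move=> K_sub X_le; rewrite count_map.
apply: leq_trans (sub_count (a1 := mem K) _ _); last first.
  move=> k k_K /=; have := fintype.subsetP K_sub k k_K.
  by rewrite inE => /andP[/negPf -> _]; exact: X_le.
rewrite count_mem_enum (finset.setIidPr _) //.
exact: fintype.subset_trans K_sub (finset.subsetDl _ _).
Qed.

Lemma step_ge t i mu : i \notin F -> (forall j, j \notin F -> mu <= v t j) ->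
  mu + L t.+1 i <= v t.+1 i.
Proof.
move=> i_F mu_le; rewrite v_rec // lerD2r ler_pdivlMr ?ltr_wpDl //.
have := trimmed_sum_ge (count_received_lt i mu_le); have := mu_le i i_F; nra.
Qed.

Lemma eventually_lower_bound :
  exists mu, \forall t \near \oo, forall j, j \notin F -> mu <= v t j.
Proof.
have [T0 _ L_ge0] : \forall t \near \oo, forall j, j \notin F -> 0 <= L t j.
  apply: filter_forall => j; have [j_F|j_F] := boolP (j \in F).
    by apply: nearW => t /negP[].
  have [j_Info|j_Info] := boolP (j \in Info); last by apply: nearW => t _; rewrite L_notInfo.
  by apply: filterS ((cvgryPge _).1 (L_Info j_F j_Info) 0) => t ? _.
exists (- \sum_j `|v T0 j|); exists T0 => // t /= /subnK <-.
elim: (_ - T0)%N => [|m IH] j j_F.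
  by rewrite add0n; apply: lerNnormlW; rewrite (bigD1 j) //= lerDl sumr_ge0.
rewrite addSn; apply: le_trans (step_ge j_F IH); rewrite lerDl L_ge0 //=.
by rewrite leqW // leq_addl.
Qed.

Lemma Info_cvgy i : i \notin F -> i \in Info -> v^~ i @ \oo --> +oo.
Proof.
move=> i_F i_Info; have [mu mu_le] := eventually_lower_bound.
rewrite -(@cvg_shiftS R^o); apply/cvgryPge => M.
have := L_Info i_F i_Info; rewrite -(@cvg_shiftS R^o) => /cvgryPge/(_ (M - mu)).
apply: filterS2 mu_le => t /(step_ge i_F) + /= L_ge; apply: le_trans.
by rewrite -lerBlDl.
Qed.

Lemma cvgy_of_many_cvgy_In_nb j (K : {set 'I_n}) :
  j \notin F -> j \notin Info -> K \subset In_nb E j :\: F -> (f < #|K|)%N ->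
  (forall k, k \in K -> v^~ k @ \oo --> +oo) -> v^~ j @ \oo --> +oo.
Proof.
move=> j_F j_Info K_sub K_gt K_cvg; have [mu mu_le] := eventually_lower_bound.
have nb_gt := two_f_lt_card_In_nb source_meets_Info j_Info.
set m := (#|In_nb E j| - 2 * f)%N.
have m_pred : m.-1%:R = m%:R - 1 :> R by rewrite -subn1 natrB // /m; lia.
rewrite -(@cvg_shiftS R^o); apply/cvgryPge => M.
(* chosen so that [X + m * mu = (m + 1) * M] *)
pose X := (m%:R + 1) * M - m%:R * mu.
have K_ge : \forall t \near \oo, forall k, k \in K -> X <= v t k.
  apply: filter_forall => k; have [k_K|_] := boolP (k \in K); last exact: nearW.
  by apply: filterS ((cvgryPge _).1 (K_cvg k k_K) X) => t ? _.
apply: filterS2 mu_le K_ge => t mu_le K_ge /=.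
rewrite v_rec // L_notInfo // addr0 size_received -/m ler_pdivlMr ?ltr_wpDl //.
have many_large := leq_trans K_gt (count_received_ge K_sub K_ge).
have := trimmed_sum_ge_large (count_received_lt j mu_le) many_large.
rewrite size_received -/m m_pred => /(_ nb_gt).
have := mu_le j j_F; rewrite /X; nra.
Qed.

Theorem nonfaulty_cvgy i : i \notin F -> v^~ i @ \oo --> +oo.
Proof.
pose Good := [set j | `[< v^~ j @ \oo --> +oo >]]%SET.
have GoodP j : reflect (v^~ j @ \oo --> +oo) (j \in Good) by rewrite inE; exact: asboolP.
move=> i_F; apply/GoodP.
apply: (reduced_graph_closure source_meets_Info card_F) i_F => [j j_F j_Info|j j_F].
  by apply/GoodP; exact: Info_cvgy.
apply: contraR; rewrite -ltnNge => many_Good; apply/GoodP.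
have [j_Info|j_Info] := boolP (j \in Info); first exact: Info_cvgy.
apply: (cvgy_of_many_cvgy_In_nb j_F j_Info _ many_Good).
  by apply/fintype.subsetP => k; rewrite !inE => /andP[-> /andP[-> _]].
by move=> k; rewrite inE => /andP[_ /andP[_ /GoodP]].
Qed.

End ResilientDynamics.

Lemma nneseries_geometric_lty (R : realType) (r : R) : 0 < r < 1 ->
  (\sum_(t <oo) (r ^+ t)%:E < +oo)%E.
Proof.
move=> /andP[r_gt0 r_lt1]; apply: (@le_lt_trans _ _ (1 / (1 - r))%:E); last exact: ltey.
apply: lime_le; first by apply: is_cvg_nneseries => k _ _; rewrite lee_fin exprn_ge0 ?ltW.
apply: nearW => k; rewrite sumEFin lee_fin.
have := geometric_le_lim k ler01 r_gt0; rewrite (ger0_norm (ltW r_gt0)) => /(_ r_lt1).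
by rewrite /series /=; under eq_bigr do rewrite mul1r.
Qed.

Section BorelCantelli.
Variables (d : measure_display) (T : measurableType d) (R : realType).
Variables (mu : {measure set T -> \bar R}) (B : (set T)^nat).

Lemma Boole_inequality_seq (I : Type) (r : seq I) (Q : pred I) (A : I -> set T) :
  (forall i, measurable (A i)) ->
  (mu (\big[setU/set0]_(i <- r | Q i) A i) <= \sum_(i <- r | Q i) mu (A i))%E.
Proof.
move=> A_meas; elim: r => [|i r IH]; first by rewrite !big_nil measure0.
rewrite !big_cons; case: (Q i) => //; apply: le_trans (measureU2 _ _ _) _ => //.
  exact: bigsetU_measurable.
exact: leeD2l.
Qed.

Lemma ae_eventually_notin : (forall t, measurable (B t)) ->
  (\sum_(t <oo) mu (B t) < +oo)%E -> {ae mu, forall x, \forall t \near \oo, ~ B t x}.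
Proof.
move=> B_meas B_sum; exists (lim_sup_set B); split.
- by apply: bigcap_measurable => [|k _]; [exists 0%N | exact: bigcup_measurable].
- exact: lim_sup_set_cvg0.
move=> x /= not_ev N _; apply: contrapT => no_B; apply: not_ev.
by exists N => // t /= Nt Bt; apply: no_B; exists t.
Qed.

End BorelCantelli.

Lemma sqrt_mul_le_mean (R : realFieldType) (x y u : R) :
  0 < x -> 0 < y -> 0 <= u -> u * u = x * y ->
  u <= (x + y) / 2 /\ (x != y -> u < (x + y) / 2).
Proof.
move=> x_gt0 y_gt0 u_ge0 u_sqr; split=> [|x_neq_y].
  by have := sqr_ge0 (x - y); nra.
have : 0 < (x - y) ^+ 2 by rewrite exprn_even_gt0 // subr_eq0.
nra.
Qed.

Section IidProducts.
Variables (d : measure_display) (Omega : measurableType d) (R : realType).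
Variables (P : probability Omega R) (T : finType) (X : nat -> Omega -> T).
Variable p : T -> R.
Hypothesis p_ge0 : forall w, 0 <= p w.
Hypothesis X_meas : forall k w, measurable [set om | X k om = w].
Hypothesis X_iid : forall t (w : 'I_t -> T),
  P [set om | forall k : 'I_t, X k om = w k] = (\prod_k p (w k))%:E.

Definition cylinder t (w : {ffun 'I_t -> T}) := [set om | forall k : 'I_t, X k om = w k].

Definition first_obs t om : {ffun 'I_t -> T} := [ffun k : 'I_t => X k om].

Lemma first_obs_preimage t (Q : pred {ffun 'I_t -> T}) :
  [set om | Q (first_obs t om)] = \big[setU/set0]_(w | Q w) cylinder w.
Proof.
rewrite -bigcup_seq_cond; apply/seteqP; split=> [om Q_om|om [w /= /andP[_ Q_w] X_w]].
  by exists (first_obs t om); rewrite /= ?mem_index_enum // => k; rewrite ffunE.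
by rewrite /= (_ : first_obs t om = w) //; apply/ffunP => k; rewrite ffunE X_w.
Qed.

Lemma measurable_cylinder t (w : {ffun 'I_t -> T}) : measurable (cylinder w).
Proof.
rewrite (_ : cylinder w = \big[setI/setT]_(k < t) [set om | X k om = w k]).
  by apply: bigsetI_measurable => k _; exact: X_meas.
rewrite -bigcap_seq; apply/seteqP; split=> [om X_w k _ | om X_w k]; first exact: X_w.
by apply: X_w; rewrite /= mem_index_enum.
Qed.

Lemma measurable_first_obs t (Q : pred {ffun 'I_t -> T}) :
  measurable [set om | Q (first_obs t om)].
Proof.
by rewrite first_obs_preimage; apply: bigsetU_measurable => w _; exact: measurable_cylinder.
Qed.

Definition prod_ge (g : T -> R) c t := [set om | (c ^+ t <= \prod_(k < t) g (X k om))%R].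

Lemma prod_geE g c t : prod_ge g c t = [set om | c ^+ t <= \prod_k g (first_obs t om k)].
Proof.
have obsE om : \prod_k g (first_obs t om k) = \prod_(k < t) g (X k om).
  by apply: eq_bigr => k _; rewrite ffunE.
by apply/seteqP; split=> om; rewrite /= obsE.
Qed.

Lemma measurable_prod_ge g c t : measurable (prod_ge g c t).
Proof. by rewrite prod_geE; exact: (measurable_first_obs (fun w => c ^+ t <= \prod_k g (w k))). Qed.

(* Markov's inequality for the product [\prod_k g (X k)], whose mean is
   [(\sum_w p w * g w) ^+ t]. *)
Lemma prod_markov (g : T -> R) (c : R) t : 0 < c -> (forall w, 0 <= g w) ->
  (P (prod_ge g c t) <= (((\sum_w p w * g w) / c) ^+ t)%:E)%E.
Proof.
move=> c_gt0 g_ge0; have ct_gt0 : 0 < c ^+ t by exact: exprn_gt0.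
pose large (w : {ffun 'I_t -> T}) := c ^+ t <= \prod_k g (w k).
rewrite prod_geE (first_obs_preimage large).
apply: le_trans (Boole_inequality_seq _ _ _ (measurable_cylinder (t := t))) _.
rewrite (eq_bigr (fun w : {ffun 'I_t -> T} => (\prod_k p (w k))%:E)) => [|w _]; last exact: X_iid.
rewrite sumEFin lee_fin.
apply: (@le_trans _ _ (\sum_(w | large w) \prod_k (p (w k) * g (w k)) / c ^+ t)).
  apply: ler_sum => w large_w; rewrite big_split /= -mulrA ler_peMr //.
    by apply: prodr_ge0 => k _; exact: p_ge0.
  by rewrite ler_pdivlMr // mul1r.
apply: (@le_trans _ _ (\sum_(w : {ffun 'I_t -> T}) \prod_k (p (w k) * g (w k)) / c ^+ t)).
  rewrite [leRHS](bigID large) /= lerDl; apply: sumr_ge0 => w _.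
  by rewrite divr_ge0 ?(ltW ct_gt0) // prodr_ge0 // => k _; rewrite mulr_ge0.
rewrite -mulr_suml -(bigA_distr_bigA (fun _ w => p w * g w)) /=.
by rewrite prodr_const card_ord expr_div_n.
Qed.

End IidProducts.

Section LogLikelihoodRatioDivergence.
Variables (d : measure_display) (Omega : measurableType d) (R : realType).
Variables (P : probability Omega R) (T : finType) (X : nat -> Omega -> T).
Variables (p q : T -> R).
Hypotheses (p_gt0 : forall w, 0 < p w) (q_gt0 : forall w, 0 < q w).
Hypotheses (p_sum1 : \sum_w p w = 1) (q_sum1 : \sum_w q w = 1).
Hypothesis p_neq_q : exists w, p w != q w.
Hypothesis X_meas : forall k w, measurable [set om | X k om = w].
Hypothesis X_iid : forall t (w : 'I_t -> T),
  P [set om | forall k : 'I_t, X k om = w k] = (\prod_k p (w k))%:E.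

Definition llr w := ln (p w / q w).

(* Since [expR (- llr w / 2) = sqrt (q w / p w)], this is the Bhattacharyya
   coefficient [\sum_w sqrt (p w * q w)]. *)
Definition bhattacharyya := \sum_w p w * expR (- llr w / 2).

Lemma bhattacharyya_termE w :
  (p w * expR (- llr w / 2)) * (p w * expR (- llr w / 2)) = p w * q w.
Proof.
have p_neq0 := lt0r_neq0 (p_gt0 w).
rewrite mulrACA -expRD -splitr expRN lnK ?posrE ?divr_gt0 // invf_div.
by field.
Qed.

Lemma bhattacharyya_gt0 : 0 < bhattacharyya.
Proof.
have [w0 _] := p_neq_q; rewrite /bhattacharyya (bigD1 w0) //= ltr_wpDr //.
  by apply: sumr_ge0 => w _; rewrite mulr_ge0 ?expR_ge0 ?ltW.
by rewrite mulr_gt0 ?expR_gt0.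
Qed.

Lemma bhattacharyya_lt1 : bhattacharyya < 1.
Proof.
have [w0 pq_w0] := p_neq_q.
have mean_bound w := sqrt_mul_le_mean (p_gt0 w) (q_gt0 w)
  (mulr_ge0 (ltW (p_gt0 w)) (expR_ge0 _)) (bhattacharyya_termE w).
have <- : \sum_w (p w + q w) / 2 = 1 by rewrite -mulr_suml big_split /= p_sum1 q_sum1; field.
rewrite /bhattacharyya (bigD1 w0) //= [ltRHS](bigD1 w0) //=.
by apply: ltr_leD; [exact: (mean_bound w0).2 | apply: ler_sum => w _; exact: (mean_bound w).1].
Qed.

Theorem llr_cvgy :
  {ae P, forall om, (fun t => \sum_(k < t) llr (X k om)) @ \oo --> +oo}.
Proof.
have rho_gt0 := bhattacharyya_gt0; have rho_lt1 := bhattacharyya_lt1.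
set rho := bhattacharyya in rho_gt0 rho_lt1 *.
pose sigma := (1 + rho) / 2; pose g w := expR (- llr w / 2).
have sigma_gt0 : 0 < sigma by rewrite /sigma; lra.
have sigma_lt1 : sigma < 1 by rewrite /sigma; lra.
have : {ae P, forall om, \forall t \near \oo, ~ prod_ge X g sigma t om}.
  apply: ae_eventually_notin => [t|]; first exact: measurable_prod_ge.
  apply: le_lt_trans (nneseries_geometric_lty (r := rho / sigma) _); last first.
    by rewrite divr_gt0 // ltr_pdivrMr // mul1r /sigma; lra.
  apply: lee_nneseries => [t _ _|t _]; first exact: measure_ge0.
  exact: (prod_markov (fun w => ltW (p_gt0 w)) X_meas X_iid t sigma_gt0 (fun w => expR_ge0 _)).
apply: filterS => om small; set c := - (2 * ln sigma).
have c_gt0 : 0 < c by rewrite /c oppr_gt0 pmulr_rlt0 // ln_lt0 // sigma_gt0.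
apply/cvgryPge => M; apply: filterS2 small ((cvgryPge _).1 (@cvgr_idn R) (M / c)).
move=> t /negP; rewrite /= -ltNge => small_t Mc_le_t.
have llr_gt : t%:R * c < \sum_(k < t) llr (X k om).
  move: small_t; rewrite /g -expR_sum -mulr_suml sumrN.
  rewrite -[sigma ^+ t]lnK ?posrE ?exprn_gt0 // ltr_expR lnXn // -mulr_natr /c.
  lra.
by apply: le_trans (ltW llr_gt); rewrite -ler_pdivrMr.
Qed.

End LogLikelihoodRatioDivergence.

Lemma ln_prod (R : realType) (I : Type) (r : seq I) (z : I -> R) :
  (forall i, 0 < z i) -> ln (\prod_(i <- r) z i) = \sum_(i <- r) ln (z i).
Proof.
move=> z_gt0; rewrite (eq_bigr (fun i => expR (ln (z i)))) => [|i _].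
  by rewrite -expR_sum expRK.
by rewrite lnK ?posrE.
Qed.

Section IndependentSignals.
Local Unset Implicit Arguments.
Variables (d : measure_display) (Omega : measurableType d) (R : realType).
Variables (P : probability Omega R) (n : nat) (S : 'I_n -> finType).
Variables (p : forall i, S i -> R) (sig : forall i, nat -> Omega -> S i).
Local Set Implicit Arguments.
Hypothesis sig_iid : forall (J : seq ('I_n * nat)) (w : forall x : 'I_n * nat, S x.1),
  uniq J -> P (\big[setI/setT]_(x <- J) [set om | sig x.1 x.2 om = w x]) =
            (\prod_(x <- J) p x.1 (w x))%:E.
Variable j : 'I_n.

(* Only the values at the pairs [(j, k)], [k < t], matter; the default
   values elsewhere are arbitrary. *)
Definition extend_obs t (w : 'I_t -> S j) (x : 'I_n * nat) : S x.1 :=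
  match j =P x.1 with
  | ReflectT e => ecast i (S i) e (oapp w (sig j 0 point) (insub x.2))
  | ReflectF _ => sig x.1 0 point
  end.

Lemma extend_obsE t (w : 'I_t -> S j) (k : 'I_t) : extend_obs w (j, val k) = w k.
Proof. by rewrite /extend_obs; case: eqP => // e; rewrite (eq_irrelevance e erefl) /= valK. Qed.

Lemma sig_iid_agent t (w : 'I_t -> S j) :
  P [set om | forall k : 'I_t, sig j k om = w k] = (\prod_k p j (w k))%:E.
Proof.
have J_uniq : uniq [seq (j, val k) | k <- index_enum 'I_t].
  by rewrite map_inj_uniq ?index_enum_uniq // => k k' [/val_inj].
move: (sig_iid (extend_obs w) J_uniq); rewrite !big_map.
under eq_bigr do rewrite extend_obsE; under [in RHS]eq_bigr do rewrite extend_obsE.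
move=> <-; congr (P _); rewrite -bigcap_seq; apply/seteqP; split=> [om sig_w k _|om sig_w k].
  exact: sig_w.
by apply: sig_w; rewrite /= mem_index_enum.
Qed.

End IndependentSignals.

Section PairwiseLearningDivergence.
Local Unset Implicit Arguments.
Variables (R : realType) (n f : nat) (E : rel 'I_n) (Th : finType).
Variables (S : 'I_n -> finType) (ell : forall i, Th -> S i -> R).
Local Set Implicit Arguments.
Hypothesis ell_gt0 : forall i a w, 0 < ell i a w.

Definition informative a b := [set j | [exists w, ell j a w != ell j b w]]%SET.

Lemma exists_informative_of_KL (C : {set 'I_n}) a b :
  \sum_(j in C) KL ell j a b != 0 -> exists2 j, j \in C & j \in informative a b.
Proof.
move=> KL_neq0; apply/exists_inP; apply: contraNT KL_neq0.
rewrite negb_exists_in => /forall_inP same; apply/eqP/big1 => j /same.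
rewrite inE negb_exists => /forallP eq_ell; apply: big1 => w _.
by rewrite (eqP (negPn (eq_ell w))) divff ?ln1 ?mulr0 // gt_eqF.
Qed.

Lemma PL_swap F adv obs t i a b :
  PL f E ell F adv obs t i b a =
  - PL f E ell F (fun t j i x y => - adv t j i y x) obs t i a b.
Proof.
elim: t i => [|t IH] i /=; first by rewrite oppr0.
have prod_gt0 c : 0 < \prod_(k < t.+1) ell i c (obs i k) by apply: prodr_gt0.
set vals := [seq _ | _ <- _]; set vals' := [seq _ | _ <- _].
have -> : vals = map -%R vals'.
  by rewrite -map_comp; apply: eq_map => j /=; case: (j \in F); rewrite ?opprK ?IH.
rewrite trimmed_sumN size_map IH -[X in ln X]invf_div lnV ?posrE ?divr_gt0 //.
by rewrite -opprD mulNr opprD.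
Qed.

Lemma ln_prod_ratio a b (obs : forall i, nat -> S i) j t :
  ln ((\prod_(k < t) ell j a (obs j k)) / \prod_(k < t) ell j b (obs j k)) =
  \sum_(k < t) llr (ell j a) (ell j b) (obs j k).
Proof. by rewrite -prodf_div ln_prod // => k; rewrite divr_gt0. Qed.

Section Convergence.
Variables (a b : Th) (F : {set 'I_n}) (obs : forall i, nat -> S i).
Hypothesis card_F : (#|F| <= f)%N.
Hypothesis source_informative : forall F' H C,
  reduced_graph f E F' H -> source_component F' H C ->
  exists2 j, j \in C & j \in informative a b.
Hypothesis informative_llr_cvgy : forall j, j \in informative a b ->
  (fun t => \sum_(k < t) llr (ell j a) (ell j b) (obs j k)) @ \oo --> +oo.

Lemma PL_cvgy adv i : i \notin F -> (fun t => PL f E ell F adv obs t i a b) @ \oo --> +oo.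
Proof.
move=> i_F; apply: (nonfaulty_cvgy (v := fun t i => PL f E ell F adv obs t i a b)
  (L := fun t j => ln ((\prod_(k < t) ell j a (obs j k)) / \prod_(k < t) ell j b (obs j k)))
  _ card_F _ _ source_informative i_F) => [//|j _ /informative_llr_cvgy|j _].
  by under eq_fun do rewrite -ln_prod_ratio.
rewrite inE negb_exists => /forallP eq_ell t.
under eq_bigr do rewrite (eqP (negPn (eq_ell _))).
by rewrite divff ?ln1 // gt_eqF // prodr_gt0.
Qed.

Lemma PL_cvgNy adv i : i \notin F -> (fun t => PL f E ell F adv obs t i b a) @ \oo --> -oo.
Proof.
move=> i_F; pose adv' t j i x y := - adv t j i y x.
have -> : (fun t => PL f E ell F adv obs t i b a) = - (fun t => PL f E ell F adv' obs t i a b).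
  by apply/funext => t; rewrite PL_swap.
by apply/cvgNrNy; exact: PL_cvgy.
Qed.

End Convergence.

End PairwiseLearningDivergence.

Theorem theorem8 (R : realType) (d : measure_display) (Omega : measurableType d)
  (P : probability Omega R) (n f : nat) (E : rel 'I_n)
  (Th : finType) (th_star : Th) (S : 'I_n -> finType)
  (ell : forall i, Th -> S i -> R)
  (ell_pos : forall i a w, 0 < ell i a w)
  (ell_distr : forall i a, \sum_(w : S i) ell i a w = 1)
  (sig : forall i, nat -> Omega -> S i)
  (sig_meas : forall i k (w : S i), measurable [set om | sig i k om = w])
  (sig_iid : forall (J : seq ('I_n * nat)) (w : forall p : 'I_n * nat, S p.1),
      uniq J ->
      P (\big[setI/setT]_(p <- J) [set om | sig p.1 p.2 om = w p]) =
      ((\prod_(p <- J) ell p.1 th_star (w p))%:E))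
  (one_source : forall F H, reduced_graph f E F H ->
      exists C, source_component F H C /\
                (forall C', source_component F H C' -> C' = C))
  (identif : forall th, th != th_star -> forall F H C,
      reduced_graph f E F H -> source_component F H C ->
      \sum_(j in C) KL ell j th_star th != 0)
  (F : {set 'I_n}) (HF : (#|F| <= f)%N)
  (adv : Omega -> nat -> 'I_n -> 'I_n -> Th -> Th -> R) :
  forall i, i \notin F -> forall th, th != th_star ->
  {ae P, forall om,
     ((fun t => PL f E ell F (adv om) (fun j k => sig j k om) t i th_star th)
        @ \oo --> +oo) /\
     ((fun t => PL f E ell F (adv om) (fun j k => sig j k om) t i th th_star)
        @ \oo --> -oo)}.
Proof.
move=> i i_F th th_neq.
have source_informative F' H C : reduced_graph f E F' H -> source_component F' H C ->
    exists2 j, j \in C & j \in informative ell th_star th.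
  by move=> H_red C_src; exact: exists_informative_of_KL (identif th th_neq F' H C H_red C_src).
have llr_ae : {ae P, forall om j, j \in informative ell th_star th ->
    (fun t => \sum_(k < t) llr (ell j th_star) (ell j th) (sig j k om)) @ \oo --> +oo}.
  apply: filter_forall => j.
  have [|_] := boolP (j \in informative ell th_star th); last exact: aeW.
  rewrite inE => /existsP ell_neq.
  apply: filterS (llr_cvgy (ell_pos j th_star) (ell_pos j th) (ell_distr j th_star)
    (ell_distr j th) ell_neq (sig_meas j)
    (fun t => sig_iid_agent (p := fun i => ell i th_star) sig_iid (j := j) (t := t))).
  by move=> om ? _.
apply: filterS llr_ae => om llr_cvg; split.
  exact: PL_cvgy.
exact: PL_cvgNy.
Qed.
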